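(* Let $P$ be a finite poset with height function $h$. Then the $q$-Zeta polynomial of $P$ with the shifted height function $h+1$ is $$\mathsf{Z}_{P,h+1}(x)=\frac{1}{q}\big(1+(q-1)x\big)\,\mathsf{Z}_{P,h}(x).$$
   Context: $q$ is an indeterminate; $[n]_q=(q^n-1)/(q-1)$. A height function on a finite poset $P$ is $h:P\to\mathbb{N}$ with $h(x)<h(y)$ whenever $y$ covers $x$. The $q$-Zeta polynomial $\mathsf{Z}_{P,h}\in\mathbb{Q}(q)[x]$ is the unique polynomial with $\mathsf{Z}_{P,h}([n]_q)=\sum_{e_1\le\cdots\le e_{n-1}\text{ in }P}q^{h(e_1)+\cdots+h(e_{n-1})}$ for all integers $n\ge2$ (such a polynomial exists). *)

From HB Require Import structures.
From mathcomp Require Import all_boot all_order all_algebra.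
From mathcomp Require Import fraction.
Set Implicit Arguments. Unset Strict Implicit. Unset Printing Implicit Defensive.
Import Order.TTheory GRing.Theory.
Local Open Scope ring_scope.

Definition Qq : fieldType := {fraction {poly rat}}.

Definition qv : Qq := tofrac ('X : {poly rat}).

Definition qint (n : nat) : Qq := (qv ^+ n - 1) / (qv - 1).

Definition covers (d : Order.disp_t) (P : finPOrderType d) (x y : P) : bool :=
  ((x < y)%O && [forall z : P, ~~ ((x < z)%O && (z < y)%O)]).

Definition height_fun (d : Order.disp_t) (P : finPOrderType d) (h : P -> nat) : Prop :=
  forall x y : P, covers x y -> (h x < h y)%N.

Definition multichain_sum (d : Order.disp_t) (P : finPOrderType d) (h : P -> nat)
    (n : nat) : Qq :=
  \sum_(t : (n.-1).-tuple P | sorted (fun a b : P => (a <= b)%O) t)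
     qv ^+ (\sum_(i < n.-1) h (tnth t i))%N.

(* Z is the q-Zeta polynomial of (P, h): Z([n]_q) = multichain_sum for all n >= 2.
   (It is unique, since the points [n]_q, n >= 2, are pairwise distinct.) *)
Definition is_qZeta (d : Order.disp_t) (P : finPOrderType d) (h : P -> nat)
    (Z : {poly Qq}) : Prop :=
  forall n : nat, (2 <= n)%N -> Z.[qint n] = multichain_sum h n.

From HB Require Import structures.
From mathcomp Require Import all_boot all_order all_algebra.
From mathcomp Require Import fraction.
Import Order.TTheory GRing.Theory.
Local Open Scope ring_scope.

(* Shifting h by one multiplies the weight of every multichain e_1 <= ... <= e_(n-1)
   by q^(n-1), and q^(n-1) = (1 + (q-1)[n]_q)/q.  Hence both sides of the identity
   agree at the infinitely many distinct points [n]_q, n >= 2, so they are equal. *)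

Lemma poly_inj_eval_eq (R : idomainType) (f : nat -> R) (p r : {poly R}) :
  injective f -> (forall n, p.[f n] = r.[f n]) -> p = r.
Proof.
move=> f_inj prf; apply/eqP; rewrite -subr_eq0; apply/eqP.
apply: (@roots_geq_poly_eq0 _ _ [seq f i | i <- iota 0 (size (p - r))]).
- by apply/allP => _ /mapP[i _ ->]; rewrite /root hornerD hornerN prf subrr.
- by rewrite map_inj_uniq ?iota_uniq.
- by rewrite size_map size_iota.
Qed.

Lemma qv_neq0 : qv != 0.
Proof. by rewrite tofrac_eq0 polyX_eq0. Qed.

Lemma qv_expn_inj : injective (GRing.exp qv).
Proof.
move=> m n; rewrite /qv -!tofracXn => /eqP; rewrite tofrac_eq => /eqP.
by move/(congr1 (fun p : {poly rat} => size p)); rewrite !size_polyXn => -[].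
Qed.

Lemma qv_sub1_neq0 : qv - 1 != 0.
Proof. by apply: contra_neq qv_neq0 => /eqP; rewrite subr_eq0 => /eqP /(@qv_expn_inj 1 0). Qed.

Lemma qv_expnE n : qv ^+ n = 1 + (qv - 1) * qint n.
Proof. by rewrite /qint mulrC divfK ?qv_sub1_neq0 // addrC subrK. Qed.

Lemma qint_inj : injective qint.
Proof. by move=> m n eq_mn; apply: qv_expn_inj; rewrite !qv_expnE eq_mn. Qed.

Lemma multichain_sum_succ (d : Order.disp_t) (P : finPOrderType d) (h : P -> nat) n :
  multichain_sum (fun x => (h x).+1) n = qv ^+ n.-1 * multichain_sum h n.
Proof.
rewrite /multichain_sum mulr_sumr; apply: eq_bigr => t _.
have -> : (\sum_(i < n.-1) (h (tnth t i)).+1 = \sum_(i < n.-1) h (tnth t i) + n.-1)%N.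
  by rewrite -[X in (_ + X)%N]card_ord -sum1_card -big_split; apply: eq_bigr => i _; rewrite -addn1.
by rewrite exprD mulrC.
Qed.

Theorem mainTheorem16 (d : Order.disp_t) (P : finPOrderType d) (h : P -> nat)
    (Zh Zh1 : {poly Qq}) :
  height_fun h ->
  is_qZeta h Zh ->
  is_qZeta (fun x => (h x).+1) Zh1 ->
  Zh1 = qv^-1 *: ((1 + (qv - 1) *: 'X) * Zh).
Proof.
move=> _ zetaZh zetaZh1.
apply: (@poly_inj_eval_eq _ (fun n => qint n.+2)) => [m n /qint_inj [] //|n].
rewrite hornerZ hornerM hornerD hornerC hornerZ hornerX -qv_expnE.
rewrite zetaZh1 // zetaZh // multichain_sum_succ exprS mulrA mulKf ?qv_neq0 //.
Qed.
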